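(* Let $S$ be an intra-regular $\Gamma$-AG$^{**}$-groupoid and $A\subseteq S$ nonempty. Then $A$ is a $\Gamma$-bi-ideal (respectively $\Gamma$-generalized bi-ideal) of $S$ if and only if $(A\Gamma S)\Gamma A=A$ and $A\Gamma A=A$.
   Context: Let $S$ and $\Gamma$ be nonempty sets with a map $S\times\Gamma\times S\to S$, $(x,\gamma,y)\mapsto x\gamma y$. $S$ is a $\Gamma$-AG-groupoid if $(x\gamma y)\delta z=(z\gamma y)\delta x$ for all $x,y,z\in S$, $\gamma,\delta\in\Gamma$; it is a $\Gamma$-AG$^{**}$-groupoid if moreover $a\alpha(b\beta c)=b\alpha(a\beta c)$ for all $a,b,c\in S$, $\alpha,\beta\in\Gamma$. For subsets $A,B\subseteq S$, $A\Gamma B=\{a\gamma b: a\in A,\gamma\in\Gamma,b\in B\}$. $S$ is intra-regular if for every $a\in S$ there exist $x,y\in S$ and $\beta,\gamma,\delta\in\Gamma$ with $a=(x\beta(a\delta a))\gamma y$. A nonempty subset $B\subseteq S$ is a $\Gamma$-generalized bi-ideal if $(B\Gamma S)\Gamma B\subseteq B$, and a $\Gamma$-bi-ideal if in addition $B\Gamma B\subseteq B$. *)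

Set Implicit Arguments.

Definition fullset (S : Type) : S -> Prop := fun _ => True.

Section GammaDefs.
Variables (S G : Type) (op : S -> G -> S -> S).

Definition GammaAG : Prop :=
  forall (x y z : S) (g d : G), op (op x g y) d z = op (op z g y) d x.

Definition GammaAGss : Prop :=
  GammaAG /\ forall (a b c : S) (al be : G), op a al (op b be c) = op b al (op a be c).

Definition gprod (A B : S -> Prop) : S -> Prop :=
  fun s => exists a g b, A a /\ B b /\ s = op a g b.


Definition subset (A B : S -> Prop) : Prop := forall s, A s -> B s.
Definition set_eq (A B : S -> Prop) : Prop := forall s, A s <-> B s.

Definition intra_regular : Prop :=
  forall a : S, exists (x y : S) (be ga de : G),
    a = op (op x be (op a de a)) ga y.

Definition gen_bi_ideal (B : S -> Prop) : Prop :=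
  (exists b, B b) /\ subset (gprod (gprod B (@fullset S)) B) B.

Definition bi_ideal (B : S -> Prop) : Prop :=
  gen_bi_ideal B /\ subset (gprod B B) B.

End GammaDefs.

From Stdlib Require Import Setoid.
Set Implicit Arguments.

(* In an intra-regular Γ-AG**-groupoid every element is "self-sandwiched":
   a = (a β s) γ a for some s, and moreover a = a γ ((a δ t) δ a) for some t.
   The first identity gives A ⊆ (AΓS)ΓA for every subset A; the second, for a
   generalized bi-ideal A, gives A ⊆ AΓ((AΓS)ΓA) ⊆ AΓA.  Conversely any product
   aγb of elements a = (a β s) γ a, b = (b β' u) γ' b can be rewritten as
   (b β' v) γ b, so AΓA ⊆ (AΓS)ΓA.  Hence a generalized bi-ideal already
   satisfies (AΓS)ΓA = A = AΓA, and in particular is a bi-ideal. *)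

Section IntraRegularAGss.
Variables (S G : Type) (op : S -> G -> S -> S).
Hypothesis left_invertive : GammaAG op.
Hypothesis perm_left : forall (a b c : S) (al be : G),
  op a al (op b be c) = op b al (op a be c).
Hypothesis hir : intra_regular op.

Local Notation "x ·[ g ] y" := (op x g y)
  (at level 40, left associativity, format "x  ·[ g ]  y").

Lemma intra_regular_sandwich (a x y : S) (be ga de : G) :
  a = x ·[be] (a ·[de] a) ·[ga] y ->
  a = a ·[be] ((y ·[de] (x ·[ga] y)) ·[be] (x ·[de] (x ·[be] (a ·[de] a))) ·[ga] y)
        ·[ga] a.
Proof.
  intro ha.
  assert (ha' : a = y ·[be] (x ·[de] a) ·[ga] a).
  { rewrite ha at 1. rewrite (perm_left x a a). apply left_invertive. }
  assert (hxa : x ·[de] a = x ·[be] (a ·[de] a) ·[de] (x ·[ga] y)).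
  { rewrite ha at 1. apply perm_left. }
  assert (hw : x ·[be] (a ·[de] a)
               = a ·[ga] y ·[be] (x ·[de] (x ·[be] (a ·[de] a)))).
  { rewrite ha at 1. rewrite (left_invertive (x ·[be] (a ·[de] a)) y a).
    apply perm_left. }
  rewrite ha' at 1. rewrite hxa, (perm_left y). rewrite hw at 1.
  rewrite (left_invertive (a ·[ga] y)). rewrite (perm_left _ a y). reflexivity.
Qed.

Lemma self_sandwich (a : S) : exists s be ga, a = a ·[be] s ·[ga] a.
Proof.
  destruct (hir a) as (x & y & be & ga & de & ha).
  eexists _, be, ga. exact (intra_regular_sandwich ha).
Qed.

Lemma intra_regular_right_sandwich (a x y : S) (be ga de : G) :
  a = x ·[be] (a ·[de] a) ·[ga] y ->
  a = a ·[ga] (a ·[de] ((y ·[be] x) ·[be] x ·[ga] y) ·[de] a).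
Proof.
  intro ha.
  rewrite ha at 1. rewrite ha at 2.
  rewrite (perm_left a _ y), (perm_left x _ (a ·[ga] y)).
  rewrite (left_invertive x (a ·[de] a)), left_invertive.
  rewrite (left_invertive x (a ·[ga] y)), perm_left.
  rewrite (left_invertive (a ·[de] a)), (perm_left _ a a).
  rewrite (perm_left _ a y). reflexivity.
Qed.

Lemma product_sandwich (a b s u : S) (b1 g1 b2 g2 g : G) :
  a = a ·[b1] s ·[g1] a -> b = b ·[b2] u ·[g2] b ->
  a ·[g] b = b ·[b2] ((u ·[g2] (a ·[b1] s)) ·[g1] a) ·[g] b.
Proof.
  intros ha hb.
  rewrite ha at 1. rewrite hb at 1.
  rewrite perm_left, left_invertive, (left_invertive (a ·[b1] s) a b).
  rewrite (left_invertive (b ·[g1] a)), perm_left. reflexivity.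
Qed.

Lemma sub_gprod_sandwich (A : S -> Prop) :
  subset A (gprod op (gprod op A (@fullset S)) A).
Proof.
  intros a Aa. destruct (self_sandwich a) as (s & be & ga & e).
  exists (a ·[be] s), ga, a. repeat split; [|exact Aa|exact e].
  exists a, be, s. repeat split. exact Aa.
Qed.

Lemma gprod_self_sub_sandwich (A : S -> Prop) :
  subset (gprod op A A) (gprod op (gprod op A (@fullset S)) A).
Proof.
  intros c (a & g & b & Aa & Ab & ->).
  destruct (self_sandwich a) as (s & b1 & g1 & ea).
  destruct (self_sandwich b) as (u & b2 & g2 & eb).
  rewrite (product_sandwich g ea eb).
  eexists _, g, b. repeat split; [|exact Ab].
  eexists b, b2, _. repeat split. exact Ab.
Qed.

Lemma gen_bi_ideal_sub_gprod_self (A : S -> Prop) :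
  gen_bi_ideal op A -> subset A (gprod op A A).
Proof.
  intros [_ hsub] a Aa. destruct (hir a) as (x & y & be & ga & de & ha).
  rewrite (intra_regular_right_sandwich ha).
  eexists a, ga, _. repeat split; [exact Aa|].
  apply hsub. eexists _, de, a. repeat split; [|exact Aa].
  eexists a, de, _. repeat split. exact Aa.
Qed.

Lemma gen_bi_ideal_eqs (A : S -> Prop) :
  gen_bi_ideal op A ->
  set_eq (gprod op (gprod op A (@fullset S)) A) A /\ set_eq (gprod op A A) A.
Proof.
  intro hA. assert (hsub := proj2 hA).
  split; intro s; split.
  - apply hsub.
  - apply sub_gprod_sandwich.
  - intro hs. apply hsub, gprod_self_sub_sandwich, hs.
  - apply gen_bi_ideal_sub_gprod_self, hA.
Qed.

End IntraRegularAGss.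

Theorem mainTheorem5 (S G : Type) (op : S -> G -> S -> S)
  (hG : inhabited G)
  (hS : GammaAGss op) (hir : intra_regular op)
  (A : S -> Prop) (hA : exists a, A a) :
  (bi_ideal op A <->
     (set_eq (gprod op (gprod op A (@fullset S)) A) A /\ set_eq (gprod op A A) A))
  /\
  (gen_bi_ideal op A <->
     (set_eq (gprod op (gprod op A (@fullset S)) A) A /\ set_eq (gprod op A A) A)).
Proof.
  destruct hS as [hLI hP].
  assert (hgen := gen_bi_ideal_eqs hLI hP hir (A := A)).
  split; split.
  - intros [h _]. exact (hgen h).
  - intros [h1 h2]. repeat split; [exact hA| |]; intros s hs; [apply h1|apply h2]; exact hs.
  - exact hgen.
  - intros [h1 _]. split; [exact hA|]. intros s hs. apply h1, hs.
Qed.
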